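(* Let $U$ be a rise function, $m\ge1$, $\varepsilon_r\ge0$ and $\sigma_r\ge0$ for $r\in\{1,\dots,m\}$, $\varepsilon=\sum_{r=1}^m\varepsilon_r$, $\sigma_l\ge0$, and let $\sigma_u\ge0$ be such that $\bigodot_{r=1}^m(S_{\sigma_r}\circ H_{\varepsilon_r})(\phi)\le H_\varepsilon\circ S_{\sigma_u}(\phi)$. Let $\psi\le\phi$, and assume all phases and pulse strengths occurring in the compositions below lie in the range where the defining condition of icpd/dcpd applies. If $U$ is icpd then $$S_{\sigma_l}\circ H_\varepsilon(\phi)-S_{\sigma_l}\circ H_\varepsilon(\psi)\le\bigodot_{r=1}^m(S_{\sigma_r}\circ H_{\varepsilon_r})(\phi)-\bigodot_{r=1}^m(S_{\sigma_r}\circ H_{\varepsilon_r})(\psi)\le H_\varepsilon\circ S_{\sigma_u}(\phi)-H_\varepsilon\circ S_{\sigma_u}(\psi).$$ If $U$ is dcpd then both inequalities hold with $\le$ replaced by $\ge$.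
   Context: A rise function is a smooth $U:[0,\infty)\to[0,\infty)$ with $U'>0$, $U(0)=0$, $U(1)=1$. $H_\varepsilon(\phi)=U^{-1}(U(\phi)+\varepsilon)$, $S_\sigma(\phi)=\phi+\sigma$, and $\bigodot_{r=1}^m(S_{\sigma_r}\circ H_{\varepsilon_r}):=S_{\sigma_m}\circ H_{\varepsilon_m}\circ\cdots\circ S_{\sigma_1}\circ H_{\varepsilon_1}$. Define $\Delta H(\phi,\Delta\phi,\varepsilon):=H_\varepsilon(\phi+\Delta\phi)-H_\varepsilon(\phi)$ on $\mathcal{D}=\{(\phi,\Delta\phi,\varepsilon):0\le\varepsilon\le1,\ 0\le\phi\le1,\ 0\le\Delta\phi\le U^{-1}(1-\varepsilon)-\phi\}$. $U$ is icpd (increasing the change of phase differences) if $\frac{\partial}{\partial\phi}\Delta H\ge0$ on $\mathcal{D}$, and dcpd (decreasing the change of phase differences) if $\frac{\partial}{\partial\phi}\Delta H\le0$ on $\mathcal{D}$. *)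

From Stdlib Require Import Reals Lra ClassicalEpsilon.
Open Scope R_scope.

(* U is smooth on [0,oo) (C^oo, via a tower of derivatives Dn with
   Dn 0 = U and D(n+1) the derivative of Dn at every x >= 0),
   U' > 0 on [0,oo), U maps [0,oo) into [0,oo), U(0)=0, U(1)=1. *)
Definition rise_function (U : R -> R) : Prop :=
  (exists Dn : nat -> R -> R,
      (forall x, Dn O x = U x) /\
      (forall (n : nat) (x : R), 0 <= x -> derivable_pt_lim (Dn n) x (Dn (S n) x)) /\
      (forall x, 0 <= x -> 0 < Dn 1%nat x)) /\
  (forall x, 0 <= x -> 0 <= U x) /\
  U 0 = 0 /\ U 1 = 1.

(* U^{-1}: the (unique, since U is strictly increasing) x >= 0 with U x = y;
   an arbitrary value if y is not in the range of U on [0,oo). *)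
Definition Uinv (U : R -> R) (y : R) : R :=
  epsilon (inhabits 0) (fun x => 0 <= x /\ U x = y).

Definition H (U : R -> R) (eps phi : R) : R := Uinv U (U phi + eps).

Definition Shift (sigma phi : R) : R := phi + sigma.

Fixpoint odot (U : R -> R) (eps sig : nat -> R) (n : nat) (phi : R) : R :=
  match n with
  | O => phi
  | S k => Shift (sig (S k)) (H U (eps (S k)) (odot U eps sig k phi))
  end.

Fixpoint sum1 (eps : nat -> R) (n : nat) : R :=
  match n with
  | O => 0
  | S k => sum1 eps k + eps (S k)
  end.

Definition DeltaH (U : R -> R) (phi dphi eps : R) : R :=
  H U eps (phi + dphi) - H U eps phi.

Definition inD (U : R -> R) (phi dphi eps : R) : Prop :=
  0 <= eps <= 1 /\ 0 <= phi <= 1 /\ 0 <= dphi <= Uinv U (1 - eps) - phi.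

(* icpd / dcpd: the partial derivative of Delta H in phi is >= 0 (resp. <= 0)
   on D (wherever it exists). *)
Definition icpd (U : R -> R) : Prop :=
  forall phi dphi eps l, inD U phi dphi eps ->
    derivable_pt_lim (fun x => DeltaH U x dphi eps) phi l -> 0 <= l.

Definition dcpd (U : R -> R) : Prop :=
  forall phi dphi eps l, inD U phi dphi eps ->
    derivable_pt_lim (fun x => DeltaH U x dphi eps) phi l -> l <= 0.

(* Write x_r, y_r for the phases of the orbits of phi >= psi under the train
   S_{sigma_r} o H_{eps_r}, and E_r = eps_1 + ... + eps_r.  The proof compares
   gaps between pairs of phases that are pushed by the same pulses eps_r:

   - icpd/dcpd says that the gap DeltaH(a, d, e) produced by one pulse is
     monotone in the base phase a (mean value theorem, [DeltaH_base_mono]); with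
     the monotonicity of H_e this yields [gap_step]: one common pulse preserves
     the comparison of the gaps of two pairs when the upper pair lies to the
     right.  Iterating gives [gap_propagation]; shifts cancel in gaps.
   - The cumulative pulse H_{E_r} is itself such an orbit (H_{a+b} = H_b o H_a);
     the pulse train stays above H_{E_r}(phi) and, under the hypothesis on its
     end point, below H_{E_r}(phi + sigma_u).
   - Comparing (H_{E_r} psi, H_{E_r} phi) with (y_r, x_r) gives the lower bound
     and (y_r, x_r) with H_{E_r} of (psi, phi) + sigma_u the upper bound; the
     shift sigma_l cancels.

   Differentiability of H needs the inverse function theorem for U^{-1}. *)

From Stdlib Require Import Reals Lra Lia Ranalysis5 ClassicalEpsilon.
Open Scope R_scope.

Section RiseFunction.

Variable U : R -> R.
Hypothesis HU : rise_function U.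

Lemma rise_derivative :
  exists D : R -> R, forall x, 0 <= x -> derivable_pt_lim U x (D x) /\ 0 < D x.
Proof.
  destruct HU as [[Dn [D0 [HD Hpos]]] _].
  exists (Dn 1%nat); intros x Hx; split; auto.
  apply (derivable_pt_lim_ext (Dn 0%nat)); auto.
Qed.

Lemma U_0 : U 0 = 0.
Proof. apply HU. Qed.

Lemma U_1 : U 1 = 1.
Proof. apply HU. Qed.

Lemma U_nonneg x : 0 <= x -> 0 <= U x.
Proof. apply HU. Qed.

Lemma U_continuous x : 0 <= x -> continuity_pt U x.
Proof.
  intros Hx. destruct rise_derivative as [D HD].
  apply derivable_continuous_pt. exists (D x). apply HD; auto.
Qed.

Lemma U_lt x y : 0 <= x -> x < y -> U x < U y.
Proof.
  intros Hx Hxy. destruct rise_derivative as [D HD].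
  destruct (MVT_cor2 U D x y Hxy) as [c [Hc Hcxy]].
  - intros c Hc; apply HD; lra.
  - assert (0 < D c) by (apply HD; lra).
    assert (0 < D c * (y - x)) by (apply Rmult_lt_0_compat; lra). lra.
Qed.

Lemma U_le x y : 0 <= x -> x <= y -> U x <= U y.
Proof.
  intros Hx [Hxy | <-]; [left; apply U_lt | right]; auto.
Qed.

Lemma U_le_reflect x y : 0 <= x -> 0 <= y -> U x <= U y -> x <= y.
Proof.
  intros Hx Hy HUxy. destruct (Rle_lt_dec x y) as [|Hyx]; auto.
  pose proof (U_lt y x Hy Hyx) as HUyx. lra.
Qed.

Lemma U_2_gt_1 : 1 < U 2.
Proof. rewrite <- U_1. apply U_lt; lra. Qed.

Lemma U_onto y M : 0 <= M -> 0 <= y <= U M -> exists x, 0 <= x <= M /\ U x = y.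
Proof.
  intros HM Hy.
  destruct (Req_dec y 0) as [-> | Hy0]. { exists 0; split; [lra | apply U_0]. }
  destruct (Req_dec y (U M)) as [-> | HyM]. { exists M; split; [lra | reflexivity]. }
  assert (HM0 : 0 < M) by (destruct (Req_dec M 0) as [-> |]; [rewrite U_0 in Hy|]; lra).
  destruct (IVT_interv (fun t => U t - y) 0 M) as [x [Hx Hxy]].
  - intros a Ha. apply (continuity_pt_minus U (fct_cte y)).
    + apply U_continuous; lra.
    + apply continuity_pt_const; intros ? ?; reflexivity.
  - exact HM0.
  - rewrite U_0; lra.
  - lra.
  - exists x; split; lra.
Qed.

(* Uinv inverts U on [0, U 2], a range containing [0,1]. *)
Lemma Uinv_spec y : 0 <= y <= U 2 -> 0 <= Uinv U y /\ U (Uinv U y) = y.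
Proof.
  intros Hy. unfold Uinv. apply epsilon_spec.
  destruct (U_onto y 2) as [x [Hx HUx]]; [lra | auto |].
  exists x; split; [lra | auto].
Qed.

Lemma Uinv_U x : 0 <= x -> Uinv U (U x) = x.
Proof.
  intros Hx.
  assert (Hs : 0 <= Uinv U (U x) /\ U (Uinv U (U x)) = U x)
    by (unfold Uinv; apply epsilon_spec; exists x; auto).
  destruct Hs as [Hs0 HsU].
  apply Rle_antisym; apply U_le_reflect; lra.
Qed.

Lemma Uinv_le y1 y2 : 0 <= y1 -> y1 <= y2 -> y2 <= U 2 -> Uinv U y1 <= Uinv U y2.
Proof.
  intros H1 H12 H2.
  destruct (Uinv_spec y1) as [A1 B1]; [lra |].
  destruct (Uinv_spec y2) as [A2 B2]; [lra |].
  apply U_le_reflect; lra.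
Qed.

Lemma le_Uinv_iff z y : 0 <= z -> 0 <= y <= 1 -> (z <= Uinv U y <-> U z <= y).
Proof.
  intros Hz Hy. pose proof U_2_gt_1 as HU2.
  destruct (Uinv_spec y) as [A B]; [lra |]. split; intros Hzy.
  - rewrite <- B. apply U_le; auto.
  - rewrite <- (Uinv_U z) by auto. pose proof (U_nonneg z Hz) as HUz.
    apply Uinv_le; lra.
Qed.

Lemma Uinv_derivable y : 0 < y < U 2 -> exists l, derivable_pt_lim (Uinv U) y l.
Proof.
  intros Hy. destruct rise_derivative as [D HD].
  assert (HUinv : forall x, U 0 <= x -> x <= U 2 -> 0 <= Uinv U x <= 2).
  { intros x Hx0 Hx2. rewrite U_0 in Hx0. destruct (Uinv_spec x) as [A _]; [lra |].
    split; auto. rewrite <- (Uinv_U 2) by lra. apply Uinv_le; lra. }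
  assert (Hcont : continuity_pt (Uinv U) y).
  { apply (continuity_pt_recip_interv U (Uinv U) 0 2); try lra.
    - intros; apply U_lt; lra.
    - intros x Hx0 Hx2. rewrite U_0 in Hx0. apply (Uinv_spec x); lra.
    - exact HUinv.
    - intros a Ha; apply U_continuous; lra.
    - rewrite U_0; lra. }
  assert (Hinv0 : Uinv U 0 = 0) by (rewrite <- U_0 at 1; apply Uinv_U; lra).
  assert (Prf : forall a, Uinv U 0 <= a <= Uinv U (U 2) -> derivable_pt U a).
  { intros a Ha. exists (D a). apply HD. lra. }
  assert (Hy_mid : Uinv U 0 <= Uinv U y <= Uinv U (U 2)) by (split; apply Uinv_le; lra).
  destruct (Uinv_spec y) as [A B]; [lra |].
  eexists. apply (derivable_pt_lim_recip_interv U (Uinv U) 0 (U 2) y Prf Hcont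
                    ltac:(lra) Hy Hy_mid).
  - intros x Hx. apply (Uinv_spec x); lra.
  - rewrite (derive_pt_eq_0 U (Uinv U y) (D (Uinv U y))) by (apply HD; auto).
    assert (0 < D (Uinv U y)) by (apply HD; auto). lra.
Qed.

Lemma H_spec e x : 0 <= x -> 0 <= e -> U x + e <= 1 ->
  0 <= H U e x /\ U (H U e x) = U x + e.
Proof.
  intros Hx He Hxe. pose proof (U_nonneg x Hx) as HUx. pose proof U_2_gt_1 as HU2.
  apply Uinv_spec; lra.
Qed.

Lemma H_zero x : 0 <= x -> H U 0 x = x.
Proof. intros Hx. unfold H. rewrite Rplus_0_r. apply Uinv_U; auto. Qed.

Lemma H_add e1 e2 x : 0 <= x -> 0 <= e1 -> 0 <= e2 -> U x + (e1 + e2) <= 1 ->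
  H U (e1 + e2) x = H U e2 (H U e1 x).
Proof.
  intros Hx H1 H2 Hx12. destruct (H_spec e1 x) as [_ HUe1]; auto; try lra.
  unfold H at 2. rewrite HUe1. unfold H. f_equal. ring.
Qed.

Lemma H_le e u v : 0 <= u -> u <= v -> 0 <= e -> U v + e <= 1 -> H U e u <= H U e v.
Proof.
  intros Hu Huv He Hve. pose proof (U_le u v Hu Huv) as HUuv.
  pose proof (U_nonneg u Hu) as HUu. pose proof U_2_gt_1 as HU2. apply Uinv_le; lra.
Qed.

Lemma H_lt e u v : 0 <= u -> u < v -> 0 <= e -> U v + e <= 1 -> H U e u < H U e v.
Proof.
  intros Hu Huv He Hve. pose proof (U_lt u v Hu Huv) as HUuv.
  destruct (H_spec e u) as [A1 B1]; auto; try lra.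
  destruct (H_spec e v) as [A2 B2]; auto; try lra.
  destruct (Rlt_le_dec (H U e u) (H U e v)) as [| Hvu]; auto.
  pose proof (U_le _ _ A2 Hvu) as HUvu. lra.
Qed.

Lemma H_derivable e p : 0 <= p -> 0 < U p + e < U 2 ->
  exists l, derivable_pt_lim (H U e) p l.
Proof.
  intros Hp Hpe. destruct rise_derivative as [D HD].
  destruct (Uinv_derivable (U p + e) Hpe) as [l Hl].
  assert (Hin : derivable_pt_lim (fun x => U x + e) p (D p + 0)).
  { apply (derivable_pt_lim_plus U (fct_cte e)).
    - apply HD; auto.
    - apply derivable_pt_lim_const. }
  exists (l * (D p + 0)).
  apply (derivable_pt_lim_comp (fun x => U x + e) (Uinv U) p _ _ Hin Hl).
Qed.

Lemma DeltaH_derivable e d p : 0 <= p -> 0 <= d -> 0 < U p + e -> U (p + d) + e < U 2 ->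
  exists l, derivable_pt_lim (fun x => DeltaH U x d e) p l.
Proof.
  intros Hp Hd Hpe Hpde. pose proof (U_le p (p + d) Hp ltac:(lra)) as HUpd.
  destruct (H_derivable e (p + d)) as [l1 Hl1]; [lra | lra |].
  destruct (H_derivable e p) as [l2 Hl2]; [lra | lra |].
  assert (Hshift : derivable_pt_lim (fun x => x + d) p (1 + 0)).
  { apply (derivable_pt_lim_plus id (fct_cte d)).
    - apply derivable_pt_lim_id.
    - apply derivable_pt_lim_const. }
  exists (l1 * (1 + 0) - l2).
  apply (derivable_pt_lim_minus (comp (H U e) (fun x => x + d)) (H U e)); auto.
  apply derivable_pt_lim_comp; auto.
Qed.

End RiseFunction.

(* Both cases of the theorem at once: [cmp true] is <= and goes with icpd,
   [cmp false] is >= and goes with dcpd. *)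
Definition cmp (inc : bool) (x y : R) : Prop := if inc then x <= y else y <= x.
Definition cpd (inc : bool) (U : R -> R) : Prop := if inc then icpd U else dcpd U.

Lemma cmp_of_derivative inc (f : R -> R) a c : a < c ->
  (forall x, a <= x <= c -> exists l, derivable_pt_lim f x l) ->
  (forall x l, a < x < c -> derivable_pt_lim f x l -> cmp inc 0 l) ->
  cmp inc (f a) (f c).
Proof.
  intros Hac Hder Hsign.
  set (f' x := epsilon (inhabits 0) (fun l => derivable_pt_lim f x l)).
  assert (Hf' : forall x, a <= x <= c -> derivable_pt_lim f x (f' x))
    by (intros x Hx; apply epsilon_spec, Hder, Hx).
  destruct (MVT_cor2 f f' a c Hac Hf') as [x [Hfac Hx]].
  pose proof (Hsign x (f' x) Hx (Hf' x ltac:(lra))) as Hsx.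
  unfold cmp in *; destruct inc; nra.
Qed.

Definition pulse_orbit (U : R -> R) (e s x : nat -> R) (n : nat) : Prop :=
  forall r, (r < n)%nat -> x (S r) = H U (e (S r)) (x r) + s r.

Section GapComparison.

Variable U : R -> R.
Hypothesis HU : rise_function U.
Variable inc : bool.
Hypothesis Hcpd : cpd inc U.

Lemma DeltaH_base_mono e a c d : 0 <= e <= 1 -> 0 <= a <= c -> 0 <= d ->
  c + d <= Uinv U (1 - e) -> cmp inc (DeltaH U a d e) (DeltaH U c d e).
Proof.
  intros He Hac Hd Hcd.
  assert (HUcd : U (c + d) <= 1 - e) by (apply (le_Uinv_iff U HU); lra).
  assert (Hcd1 : c + d <= 1) by (apply (U_le_reflect U HU); [lra | lra | rewrite (U_1 U HU); lra]).
  destruct (Req_dec a c) as [<- | Hne]; [unfold cmp; destruct inc; lra |].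
  destruct (Req_dec e 0) as [-> | He0].
  { unfold DeltaH. rewrite !(H_zero U HU) by lra. unfold cmp; destruct inc; lra. }
  apply (cmp_of_derivative inc (fun x => DeltaH U x d e)); [lra | |].
  - intros x Hx. pose proof (U_nonneg U HU x ltac:(lra)) as HUx.
    pose proof (U_le U HU (x + d) (c + d) ltac:(lra) ltac:(lra)) as HUxd.
    pose proof (U_2_gt_1 U HU) as HU2.
    apply (DeltaH_derivable U HU); lra.
  - intros x l Hx Hl.
    assert (HD : inD U x d e) by (unfold inD; repeat split; lra).
    unfold cmp, cpd in *; destruct inc; apply (Hcpd x d e l); auto.
Qed.

(* Route: move the pair (a1,a2) right
   to (c2 - g, c2), g = a2 - a1, using [DeltaH_base_mono]; then change the gap
   at the fixed endpoint c2 using monotonicity of H_e. *)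
Lemma gap_step e a1 a2 c1 c2 : 0 <= e <= 1 -> 0 <= a1 <= a2 -> 0 <= c1 <= c2 ->
  a2 <= c2 -> c2 <= Uinv U (1 - e) -> cmp inc (a2 - a1) (c2 - c1) ->
  cmp inc (H U e a2 - H U e a1) (H U e c2 - H U e c1).
Proof.
  intros He Ha Hc Hac Hc2 Hgap.
  assert (HUc2 : U c2 <= 1 - e) by (apply (le_Uinv_iff U HU); lra).
  assert (Hshift : cmp inc (DeltaH U a1 (a2 - a1) e) (DeltaH U (c2 - (a2 - a1)) (a2 - a1) e)).
  { apply DeltaH_base_mono; lra. }
  assert (HUmid : U (c2 - (a2 - a1)) <= U c2) by (apply (U_le U HU); lra).
  assert (HUc1 : U c1 <= U c2) by (apply (U_le U HU); lra).
  assert (Hwiden : cmp inc (H U e c1) (H U e (c2 - (a2 - a1)))).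
  { unfold cmp in *; destruct inc; apply (H_le U HU); lra. }
  unfold DeltaH in Hshift.
  replace (a1 + (a2 - a1)) with a2 in Hshift by ring.
  replace (c2 - (a2 - a1) + (a2 - a1)) with c2 in Hshift by ring.
  unfold cmp in *; destruct inc; lra.
Qed.

(* Iterating [gap_step]: along two pairs of pulse orbits driven by the same
   pulses (the shifts cancel in the gaps), the comparison of the gaps persists
   as long as the phases stay in the domain. *)
Lemma gap_propagation (e s t a1 a2 c1 c2 : nat -> R) (n : nat) :
  pulse_orbit U e s a1 n -> pulse_orbit U e s a2 n ->
  pulse_orbit U e t c1 n -> pulse_orbit U e t c2 n ->
  (forall r, (r < n)%nat ->
     0 <= e (S r) <= 1 /\ 0 <= a1 r <= a2 r /\ 0 <= c1 r <= c2 r /\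
     a2 r <= c2 r <= Uinv U (1 - e (S r))) ->
  cmp inc (a2 0%nat - a1 0%nat) (c2 0%nat - c1 0%nat) ->
  cmp inc (a2 n - a1 n) (c2 n - c1 n).
Proof.
  intros Ha1 Ha2 Hc1 Hc2 Hdom Hgap0.
  assert (Hgap : forall r, (r <= n)%nat -> cmp inc (a2 r - a1 r) (c2 r - c1 r)).
  { induction r as [| r IH]; intros Hr; auto.
    destruct (Hdom r ltac:(lia)) as [He [Ha [Hc [Hac Hc2r]]]].
    rewrite (Ha1 r), (Ha2 r), (Hc1 r), (Hc2 r) by lia.
    pose proof (gap_step (e (S r)) _ _ _ _ He Ha Hc Hac Hc2r (IH ltac:(lia))) as Hstep.
    unfold cmp in *; destruct inc; lra. }
  apply Hgap; lia.
Qed.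

End GapComparison.

Section Orbits.

Variable U : R -> R.
Hypothesis HU : rise_function U.
Variables (eps sig : nat -> R) (m : nat).
Hypothesis Heps : forall r, (1 <= r <= m)%nat -> 0 <= eps r.
Hypothesis Hsig : forall r, (1 <= r <= m)%nat -> 0 <= sig r.

Lemma sum1_mono r r' : (r <= r' <= m)%nat -> sum1 eps r <= sum1 eps r'.
Proof.
  intros [Hrr' Hr'm]. induction Hrr' as [| r' Hrr' IH]; simpl; [lra |].
  pose proof (Heps (S r') ltac:(lia)) as He. pose proof (IH ltac:(lia)) as HE. lra.
Qed.

Lemma odot_pulse_orbit x :
  pulse_orbit U eps (fun r => sig (S r)) (fun r => odot U eps sig r x) m.
Proof. intros r _. reflexivity. Qed.

Lemma cumulative_pulse_orbit w : 0 <= w -> U w + sum1 eps m <= 1 ->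
  pulse_orbit U eps (fun _ => 0) (fun r => H U (sum1 eps r) w) m.
Proof.
  intros Hw Hwm r Hr. simpl. rewrite Rplus_0_r.
  pose proof (sum1_mono 0 r ltac:(lia)) as HE0.
  pose proof (sum1_mono (S r) m ltac:(lia)) as HEm. simpl in HEm.
  apply (H_add U HU); auto; try lra. apply Heps; lia.
Qed.

Lemma cumulative_pulse_spec w r : 0 <= w -> U w + sum1 eps m <= 1 -> (r <= m)%nat ->
  0 <= H U (sum1 eps r) w /\ U (H U (sum1 eps r) w) = U w + sum1 eps r.
Proof.
  intros Hw Hwm Hr. pose proof (sum1_mono 0 r ltac:(lia)) as HE0.
  pose proof (sum1_mono r m ltac:(lia)) as HEm. simpl in HE0.
  apply (H_spec U HU); lra.
Qed.

Section OrbitOfPoint.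

Variables x w : R.
Hypothesis Hw : 0 <= w.
Hypothesis Hwm : U w + sum1 eps m <= 1.
Hypothesis Hx : forall r, (r < m)%nat ->
  0 <= odot U eps sig r x /\ U (odot U eps sig r x) + eps (S r) <= 1.

Lemma cumulative_pulse_step r : (r < m)%nat ->
  (H U (sum1 eps r) w <= odot U eps sig r x ->
     H U (sum1 eps (S r)) w <= odot U eps sig (S r) x) /\
  (H U (sum1 eps r) w < odot U eps sig r x ->
     H U (sum1 eps (S r)) w < odot U eps sig (S r) x).
Proof.
  intros Hr. rewrite (cumulative_pulse_orbit w Hw Hwm r Hr), (odot_pulse_orbit x r Hr).
  destruct (cumulative_pulse_spec w r Hw Hwm ltac:(lia)) as [Hz _].
  destruct (Hx r Hr) as [Hx0 Hxe].
  pose proof (Heps (S r) ltac:(lia)) as He. pose proof (Hsig (S r) ltac:(lia)) as Hs.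
  split; intros Hzx.
  - pose proof (H_le U HU (eps (S r)) _ _ Hz Hzx ltac:(lra) Hxe) as Hle. lra.
  - pose proof (H_lt U HU (eps (S r)) _ _ Hz Hzx ltac:(lra) Hxe) as Hlt. lra.
Qed.

Lemma cumulative_pulse_below_orbit r : w <= x -> (r <= m)%nat ->
  H U (sum1 eps r) w <= odot U eps sig r x.
Proof.
  intros Hwx. induction r as [| r IH]; intros Hr.
  - simpl. rewrite (H_zero U HU); auto.
  - apply (cumulative_pulse_step r); [lia | apply IH; lia].
Qed.

(* Upper comparison: if the orbit ends below the cumulative pulse, it stays
   below it all along, since a strict excess would persist up to step m. *)
Lemma orbit_below_cumulative_pulse r :
  odot U eps sig m x <= H U (sum1 eps m) w -> (r <= m)%nat ->
  odot U eps sig r x <= H U (sum1 eps r) w.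
Proof.
  intros Hend Hr.
  assert (Hpersist : forall d r, (r + d = m)%nat ->
    H U (sum1 eps r) w < odot U eps sig r x -> H U (sum1 eps m) w < odot U eps sig m x).
  { induction d as [| d IH]; intros r' Hr' Hlt.
    - replace m with r' by lia. exact Hlt.
    - apply (IH (S r')); [lia |]. apply (cumulative_pulse_step r'); [lia | exact Hlt]. }
  destruct (Rle_lt_dec (odot U eps sig r x) (H U (sum1 eps r) w)) as [| Hlt]; auto.
  pose proof (Hpersist (m - r)%nat r ltac:(lia) Hlt) as Hend'. lra.
Qed.

End OrbitOfPoint.

Section GapBounds.

Variable inc : bool.
Hypothesis Hcpd : cpd inc U.
Variables psi phi : R.
Hypothesis Hdom : forall r, (r < m)%nat ->
  0 <= eps (S r) <= 1 /\
  0 <= odot U eps sig r psi <= odot U eps sig r phi /\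
  odot U eps sig r phi <= Uinv U (1 - eps (S r)).

Lemma orbit_in_domain r : (r < m)%nat ->
  0 <= odot U eps sig r phi /\ U (odot U eps sig r phi) + eps (S r) <= 1.
Proof.
  intros Hr. destruct (Hdom r Hr) as [He Hxy].
  assert (U (odot U eps sig r phi) <= 1 - eps (S r)) by (apply (le_Uinv_iff U HU); lra).
  split; lra.
Qed.

Lemma lower_gap_bound : 0 <= psi <= phi -> U phi + sum1 eps m <= 1 ->
  cmp inc (H U (sum1 eps m) phi - H U (sum1 eps m) psi)
          (odot U eps sig m phi - odot U eps sig m psi).
Proof.
  intros Hpp Hphi.
  assert (Hpsi : U psi + sum1 eps m <= 1)
    by (pose proof (U_le U HU psi phi) as HUpp; lra).
  apply (gap_propagation U HU inc Hcpd eps (fun _ => 0) (fun r => sig (S r))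
           (fun r => H U (sum1 eps r) psi) (fun r => H U (sum1 eps r) phi)
           (fun r => odot U eps sig r psi) (fun r => odot U eps sig r phi) m).
  - apply cumulative_pulse_orbit; lra.
  - apply cumulative_pulse_orbit; lra.
  - apply odot_pulse_orbit.
  - apply odot_pulse_orbit.
  - intros r Hr. destruct (Hdom r Hr) as [He Hxy].
    destruct (cumulative_pulse_spec psi r) as [Hz _]; [lra | lra | lia |].
    pose proof (sum1_mono 0 r ltac:(lia)) as HE0. simpl in HE0.
    pose proof (sum1_mono r m ltac:(lia)) as HEr.
    pose proof (H_le U HU (sum1 eps r) psi phi ltac:(lra) ltac:(lra) HE0 ltac:(lra)) as Hz12.
    pose proof (cumulative_pulse_below_orbit phi phi ltac:(lra) Hphi orbit_in_domain r
                  ltac:(lra) ltac:(lia)) as Hzx.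
    repeat split; lra.
  - simpl. rewrite !(H_zero U HU) by lra. unfold cmp; destruct inc; lra.
Qed.

Lemma upper_gap_bound sigma_u : 0 <= psi + sigma_u -> psi <= phi ->
  U (phi + sigma_u) + sum1 eps m <= 1 ->
  odot U eps sig m phi <= H U (sum1 eps m) (phi + sigma_u) ->
  cmp inc (odot U eps sig m phi - odot U eps sig m psi)
          (H U (sum1 eps m) (phi + sigma_u) - H U (sum1 eps m) (psi + sigma_u)).
Proof.
  intros Hpsi0 Hpp Hphi Hend.
  assert (Hpsi : U (psi + sigma_u) + sum1 eps m <= 1)
    by (pose proof (U_le U HU (psi + sigma_u) (phi + sigma_u)) as HUpp; lra).
  apply (gap_propagation U HU inc Hcpd eps (fun r => sig (S r)) (fun _ => 0)
           (fun r => odot U eps sig r psi) (fun r => odot U eps sig r phi)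
           (fun r => H U (sum1 eps r) (psi + sigma_u))
           (fun r => H U (sum1 eps r) (phi + sigma_u)) m).
  - apply odot_pulse_orbit.
  - apply odot_pulse_orbit.
  - apply cumulative_pulse_orbit; lra.
  - apply cumulative_pulse_orbit; lra.
  - intros r Hr. destruct (Hdom r Hr) as [He Hxy].
    destruct (cumulative_pulse_spec (psi + sigma_u) r) as [Hz1 _]; [lra | lra | lia |].
    destruct (cumulative_pulse_spec (phi + sigma_u) r) as [Hz2 HUz2]; [lra | lra | lia |].
    pose proof (sum1_mono 0 r ltac:(lia)) as HE0. simpl in HE0.
    pose proof (sum1_mono (S r) m ltac:(lia)) as HEr. simpl in HEr.
    pose proof (H_le U HU (sum1 eps r) (psi + sigma_u) (phi + sigma_u)
                  ltac:(lra) ltac:(lra) HE0 ltac:(lra)) as Hz12.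
    pose proof (orbit_below_cumulative_pulse phi (phi + sigma_u) ltac:(lra) Hphi
                  orbit_in_domain r Hend ltac:(lia)) as Hxz.
    assert (Hz2e : H U (sum1 eps r) (phi + sigma_u) <= Uinv U (1 - eps (S r)))
      by (apply (le_Uinv_iff U HU); lra).
    repeat split; lra.
  - simpl. rewrite !(H_zero U HU) by lra. unfold cmp; destruct inc; lra.
Qed.

End GapBounds.

End Orbits.

Lemma train_domain_of_inD U eps sig m psi phi :
  (forall r, (1 <= r <= m)%nat ->
     inD U (odot U eps sig (r - 1) psi)
           (odot U eps sig (r - 1) phi - odot U eps sig (r - 1) psi) (eps r)) ->
  forall r, (r < m)%nat ->
    0 <= eps (S r) <= 1 /\
    0 <= odot U eps sig r psi <= odot U eps sig r phi /\
    odot U eps sig r phi <= Uinv U (1 - eps (S r)).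
Proof.
  intros Hin r Hr. pose proof (Hin (S r) ltac:(lia)) as Hr'.
  replace (S r - 1)%nat with r in Hr' by lia. unfold inD in Hr'. lra.
Qed.

Theorem mainTheorem5 (U : R -> R) (m : nat) (eps sig : nat -> R)
  (sigma_l sigma_u phi psi : R) :
  rise_function U ->
  (1 <= m)%nat ->
  (forall r, (1 <= r <= m)%nat -> 0 <= eps r) ->
  (forall r, (1 <= r <= m)%nat -> 0 <= sig r) ->
  0 <= sigma_l ->
  0 <= sigma_u ->
  odot U eps sig m phi <= H U (sum1 eps m) (Shift sigma_u phi) ->
  psi <= phi ->
  (* range assumptions: every application of a pulse map H_a, to the pair of
     phases (lower, upper) coming from (psi, phi), happens inside D *)
  inD U psi (phi - psi) (sum1 eps m) ->
  (forall r, (1 <= r <= m)%nat ->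
     inD U (odot U eps sig (r - 1) psi)
           (odot U eps sig (r - 1) phi - odot U eps sig (r - 1) psi) (eps r)) ->
  inD U (Shift sigma_u psi) (Shift sigma_u phi - Shift sigma_u psi) (sum1 eps m) ->
  (icpd U ->
     Shift sigma_l (H U (sum1 eps m) phi) - Shift sigma_l (H U (sum1 eps m) psi)
       <= odot U eps sig m phi - odot U eps sig m psi /\
     odot U eps sig m phi - odot U eps sig m psi
       <= H U (sum1 eps m) (Shift sigma_u phi) - H U (sum1 eps m) (Shift sigma_u psi)) /\
  (dcpd U ->
     Shift sigma_l (H U (sum1 eps m) phi) - Shift sigma_l (H U (sum1 eps m) psi)
       >= odot U eps sig m phi - odot U eps sig m psi /\
     odot U eps sig m phi - odot U eps sig m psi
       >= H U (sum1 eps m) (Shift sigma_u phi) - H U (sum1 eps m) (Shift sigma_u psi)).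
Proof.
  intros HU _ Heps Hsig _ _ Hend Hpp Hin0 Hinr Hinu.
  unfold inD, Shift in *.
  pose proof (train_domain_of_inD U eps sig m psi phi Hinr) as Hdom.
  assert (Hphi : U phi + sum1 eps m <= 1)
    by (assert (U phi <= 1 - sum1 eps m) by (apply (le_Uinv_iff U HU); lra); lra).
  assert (Hphiu : U (phi + sigma_u) + sum1 eps m <= 1)
    by (assert (U (phi + sigma_u) <= 1 - sum1 eps m) by (apply (le_Uinv_iff U HU); lra); lra).
  assert (Hbounds : forall inc, cpd inc U ->
    cmp inc (H U (sum1 eps m) phi - H U (sum1 eps m) psi)
            (odot U eps sig m phi - odot U eps sig m psi) /\
    cmp inc (odot U eps sig m phi - odot U eps sig m psi)
            (H U (sum1 eps m) (phi + sigma_u) - H U (sum1 eps m) (psi + sigma_u))).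
  { intros inc Hcpd. split.
    - apply (lower_gap_bound U HU eps sig m Heps Hsig inc Hcpd psi phi Hdom); lra.
    - apply (upper_gap_bound U HU eps sig m Heps Hsig inc Hcpd psi phi Hdom); lra. }
  split; intros Hcpd;
    [destruct (Hbounds true Hcpd) | destruct (Hbounds false Hcpd)]; unfold cmp in *; lra.
Qed.
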